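(* Let $w\ge0$ be integrable on $\mathbb{T}$ and let $I\subset\mathbb{T}$ be an arc with $\int_I\log w\,dm>-\infty$. Let $p>0$ and let $\{f_n\}_{n\ge1}$ be positive functions on $\mathbb{T}$ with $\int_I f_n^p\,w\,dm<C$ for all $n$, for some constant $C>0$. Then the sequence of measures $\{\log^+f_n\,dm\}_{n\ge1}$ is uniformly absolutely continuous on $I$.
   Context: $m$ is normalized arc-length measure on the unit circle $\mathbb{T}$; $\log^+x=\max(0,\log x)$. A sequence of non-negative measures $\{g_n\,dm\}$ is uniformly absolutely continuous on $I$ if for every $\epsilon>0$ there is $\delta>0$, independent of $n$, such that every Borel set $A\subset I$ with $m(A)<\delta$ satisfies $\int_A g_n\,dm<\epsilon$ for all $n$. *)

From HB Require Import structures.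
From mathcomp Require Import all_boot all_order all_algebra.
From mathcomp Require Import all_classical all_reals all_analysis.
Set Implicit Arguments. Unset Strict Implicit. Unset Printing Implicit Defensive.
Import Order.TTheory GRing.Theory Num.Theory.
Local Open Scope ring_scope.

(* The unit circle T is modelled as R/Z: functions on T are 1-periodic
   functions on R, and normalized arc length m corresponds to Lebesgue
   measure on a period (t |-> exp(2 pi i t)). *)
Definition periodic1 (R : realType) (f : R -> R) : Prop :=
  forall x, f (x + 1) = f x.

Definition logE (R : realType) (x : R) : \bar R :=
  if x == 0 then -oo%E else (ln x)%:E.

Definition logplus (R : realType) (x : R) : R := Num.max 0 (ln x).

(* For 0 < s <= 1, applying ln y <= y to y = s f^p w gives pointwise
     p log+ f <= log(1/s) + s f^p w + log- w,
   hence p \int_A log+ f_n <= log(1/s) m(A) + s C + \int_A log- w.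
   Choose s with s C small, then m(A) small enough for the first term; the
   last term is small by absolute continuity of the integral of the single
   function log- w, which is integrable on I because \int_I log w > -oo. *)

From HB Require Import structures.
From mathcomp Require Import all_boot all_order all_algebra.
From mathcomp Require Import all_classical all_reals all_analysis.
From mathcomp Require Import measurable_realfun.
From mathcomp Require Import lra ring.
Set Implicit Arguments. Unset Strict Implicit. Unset Printing Implicit Defensive.
Import Order.TTheory GRing.Theory Num.Theory.
Local Open Scope ring_scope.
Local Open Scope classical_set_scope.

Definition uniformly_abscont {d} {T : measurableType d} {R : realType}
    (mu : {measure set T -> \bar R}) (D : set T) (g : nat -> T -> \bar R) :=
  forall eps : R, 0 < eps -> exists2 delta : R, 0 < delta &
    forall A, measurable A -> A `<=` D -> (mu A < delta%:E)%E ->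
      forall n, (\int[mu]_(x in A) g n x < eps%:E)%E.

Section integral_small_sets.
Context d (T : measurableType d) (R : realType) (mu : {measure set T -> \bar R}).
Local Open Scope ereal_scope.

Lemma ge0_integral_uniformly_abscont (D : set T) (h : T -> \bar R) :
  measurable D -> measurable_fun D h -> (forall x, D x -> 0 <= h x) ->
  \int[mu]_(x in D) h x < +oo -> uniformly_abscont mu D (fun _ => h).
Proof.
move=> mD mh h0 hfin e e0.
have intDh : mu.-integrable D h.
  apply/integrableP; split => //.
  by under eq_integral => x /[!inE] Dx do rewrite gee0_abs ?h0 //.
(* h is finite a.e. on D, so over subsets of D it integrates like the real
   integrable function f, to which integral_normr_continuous applies. *)
pose f x := fine ((h \_ D) x).
have mhD : measurable_fun setT (h \_ D) by apply/(measurable_restrictT _ mD).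
have hD0 x : 0 <= (h \_ D) x by rewrite patchE; case: ifPn => // /[!inE] /h0.
have mf : measurable_fun setT f by apply: measurableT_comp mhD.
have intf : mu.-integrable setT (EFin \o f).
  apply/integrableP; split; first exact/measurable_EFinP.
  rewrite (le_lt_trans _ hfin) // [leRHS]integral_mkcond.
  apply: ge0_le_integral => //=.
  - by apply/measurable_EFinP; apply: measurableT_comp mf.
  - move=> x _; move: (hD0 x); rewrite /f.
    by case: (_ x) => //= [r r0|_]; rewrite ?leey // ger0_norm -?lee_fin.
have [del [del0 Hdel]] := integral_normr_continuous intf e0.
exists del => // A mA AD muA _.
have -> : \int[mu]_(x in A) h x = \int[mu]_(x in A) `|f x|%:E.
  apply: ae_eq_integral => //.
  - exact: measurable_funS mh.
  - by apply/measurable_EFinP; apply: measurableT_comp (measurable_funS _ _ mf).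
  - apply: filterS (integrable_ae mD intDh) => x hfx /[dup] Ax /AD Dx.
    rewrite /f patchE mem_set //= ger0_norm ?fine_ge0 ?h0 // fineK //; exact: hfx.
rewrite -(fineK (x := \int[mu]_(x in A) _)) ?lte_fin ?Hdel //.
rewrite ge0_fin_numE ?integral_ge0 //.
apply: le_lt_trans (integrableP _ _ _ intf).2.
by apply: ge0_subset_integral => //; apply/measurable_EFinP; apply: measurableT_comp mf.
Qed.

Lemma integral_funeneg_lty (D : set T) (g : T -> \bar R) :
  -oo < \int[mu]_(x in D) g x -> \int[mu]_(x in D) g^\- x < +oo.
Proof. by rewrite integralE ltey; apply: contraTneq => ->; rewrite addeNy. Qed.

End integral_small_sets.

Section logplus.
Variable R : realType.

Lemma logplus_ge0 (x : R) : 0 <= logplus x.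
Proof. by rewrite le_max lexx. Qed.

Lemma logplus_powR (x p : R) : 0 <= p -> logplus (x `^ p) = p * logplus x.
Proof. by move=> p0; rewrite /logplus ln_powR maxr_pMr // mulr0. Qed.

Lemma measurable_logplus : measurable_fun setT (@logplus R).
Proof. exact: measurable_maxr (measurable_cst _) (@measurable_ln R). Qed.

Lemma measurable_logE : measurable_fun setT (@logE R).
Proof.
apply: measurable_fun_ifT.
- by apply: measurable_fun_eqr; [exact: measurable_id | exact: measurable_cst].
- exact: measurable_cst.
- by apply/measurable_EFinP; exact: measurable_ln.
Qed.

Lemma logplus_le (P W s : R) : 0 < P -> 0 < W -> 0 < s -> s <= 1 ->
  logplus P <= - ln s + s * (P * W) + Num.max (- ln W) 0.
Proof.
move=> P0 W0 s0 s1.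
have sPW0 : 0 < s * (P * W) by rewrite !mulr_gt0.
have lnP : ln P = ln (s * (P * W)) - ln s - ln W.
  by rewrite !lnM ?posrE ?mulr_gt0 //; ring.
have := ln_sublinear sPW0; have := ln_le0 s1.
have : - ln W <= Num.max (- ln W) 0 by rewrite le_max lexx.
have : 0 <= Num.max (- ln W) 0 by rewrite le_max lexx orbT.
rewrite /logplus ge_max; lra.
Qed.

Lemma logplus_le_funeneg_logE (F W p s : R) :
  0 < F -> 0 <= W -> 0 < p -> 0 < s -> s <= 1 ->
  ((p * logplus F)%:E <= (- ln s + s * (F `^ p * W))%:E + maxe (- logE W) 0)%E.
Proof.
move=> F0 W0 p0 s0 s1.
have [->|Wneq0] := eqVneq W 0; first by rewrite /logE eqxx /= maxye addey ?leey.
rewrite /logE (negbTE Wneq0) -EFinN -EFin_max -EFinD lee_fin.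
rewrite -logplus_powR; last exact: ltW.
by apply: logplus_le; rewrite ?powR_gt0 // lt_neqAle eq_sym Wneq0.
Qed.

End logplus.

Section integral_logplus.
Context d (T : measurableType d) (R : realType) (mu : {measure set T -> \bar R}).
Local Open Scope ereal_scope.

Lemma integral_logplus_le (A : set T) (F W : T -> R) (p s : R) :
  measurable A -> measurable_fun A F -> measurable_fun A W ->
  (forall x, A x -> (0 < F x)%R) -> (forall x, A x -> (0 <= W x)%R) ->
  (0 < p)%R -> (0 < s)%R -> (s <= 1)%R ->
  p%:E * \int[mu]_(x in A) (logplus (F x))%:E <=
  (- ln s)%:E * mu A + s%:E * \int[mu]_(x in A) (F x `^ p * W x)%R%:E
  + \int[mu]_(x in A) (@logE R \o W)^\- x.
Proof.
move=> mA mF mW F0 W0 p0 s0 s1.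
set c := (- ln s)%:E; set h := (@logE R \o W)^\-.
set lp := fun x => (logplus (F x))%:E; set g := fun x => (F x `^ p * W x)%R%:E.
have c0 : 0 <= c by rewrite lee_fin oppr_ge0 ln_le0.
have lp0 x : A x -> 0 <= lp x by rewrite lee_fin logplus_ge0.
have g0 x : A x -> 0 <= g x by move=> Ax; rewrite lee_fin mulr_ge0 ?powR_ge0 ?W0.
have sg0 x : A x -> 0 <= s%:E * g x.
  by move=> Ax; apply: mule_ge0; [rewrite lee_fin ltW | exact: g0].
have h0 x : A x -> 0 <= h x by rewrite funeneg_ge0.
have mlp : measurable_fun A lp.
  by apply/measurable_EFinP; exact: measurableT_comp (@measurable_logplus R) mF.
have mg : measurable_fun A g.
  apply/measurable_EFinP; apply: measurable_funM => //.
  exact: measurableT_comp (measurable_powR p) mF.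
have msg : measurable_fun A (fun x => s%:E * g x) by exact: measurable_funeM.
have mh : measurable_fun A h.
  exact/measurable_funeneg/(measurableT_comp (@measurable_logE R) mW).
rewrite -(ge0_integralZl_EFin _ mA lp0 mlp (ltW p0)).
rewrite -integral_cst // -(ge0_integralZl_EFin _ mA g0 mg (ltW s0)).
rewrite -(ge0_integralD _ mA (fun _ _ => c0) (measurable_cst _) sg0 msg).
rewrite -ge0_integralD //; last 2 first.
- by move=> x Ax; rewrite adde_ge0 ?sg0.
- exact: emeasurable_funD.
apply: ge0_le_integral => //.
- by move=> x Ax; apply: mule_ge0; [rewrite lee_fin ltW | exact: lp0].
- exact: measurable_funeM.
- by apply: emeasurable_funD => //; exact: emeasurable_funD.
- move=> x Ax; rewrite /lp /g /h /c -EFinM -EFinD funenegE.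
  exact: logplus_le_funeneg_logE (F0 _ Ax) (W0 _ Ax) p0 s0 s1.
Qed.

Lemma logplus_uniformly_abscont (D : set T) (w : T -> R) (f : nat -> T -> R) (p C : R) :
  measurable D -> measurable_fun D w -> (forall x, D x -> (0 <= w x)%R) ->
  -oo < \int[mu]_(x in D) logE (w x) -> (0 < p)%R ->
  (forall n, measurable_fun D (f n)) -> (forall n x, D x -> (0 < f n x)%R) ->
  (forall n, \int[mu]_(x in D) (f n x `^ p * w x)%R%:E < C%:E) ->
  uniformly_abscont mu D (fun n x => (logplus (f n x))%:E).
Proof.
move=> mD mw w0 logw_gtNy p0 mf f0 fC eps eps0.
have C0 : (0 < C)%R.
  rewrite -lte_fin; apply: le_lt_trans (fC 0%N); apply: integral_ge0 => x Dx.
  by rewrite lee_fin mulr_ge0 ?powR_ge0 ?w0.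
(* Each of the three terms bounding p * \int_A logplus (f n) is made <= p * eps / 3. *)
set q := (p * eps / 3)%R.
have q0 : (0 < q)%R by rewrite !mulr_gt0.
have mlogw : measurable_fun D (@logE R \o w).
  exact: measurableT_comp (@measurable_logE R) mw.
have [d1 d1_gt0 small_logw] := ge0_integral_uniformly_abscont mD
  (measurable_funeneg mlogw) (fun x _ => funeneg_ge0 _ x)
  (integral_funeneg_lty logw_gtNy) q0.
pose s := (Num.min 1 (q / C))%R.
have s0 : (0 < s)%R by rewrite lt_min ltr01 divr_gt0.
have s1 : (s <= 1)%R by rewrite ge_min lexx.
have sC : (s * C <= q)%R by rewrite -ler_pdivlMr // ge_min lexx orbT.
have K0 : (0 <= - ln s)%R by rewrite oppr_ge0 ln_le0.
pose d2 := (q / (- ln s + 1))%R.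
have d2_gt0 : (0 < d2)%R by rewrite divr_gt0 // ltr_wpDl.
exists (Num.min d1 d2); first by rewrite lt_min d1_gt0 d2_gt0.
move=> A mA AD muA n.
have := integral_logplus_le mA (measurable_funS mD AD (mf n)) (measurable_funS mD AD mw)
  (fun x Ax => f0 n x (AD x Ax)) (fun x Ax => w0 x (AD x Ax)) p0 s0 s1.
rewrite -(lte_pmul2l _ (p0 : 0 < p%:E)) // -EFinM => /le_lt_trans; apply.
have muA_d1 : mu A < d1%:E by apply: lt_le_trans muA _; rewrite lee_fin ge_min lexx.
have muA_d2 : mu A <= d2%:E.
  by apply: le_trans (ltW muA) _; rewrite lee_fin ge_min lexx orbT.
have lns_bound : (- ln s)%:E * mu A <= q%:E.
  apply: le_trans (lee_wpmul2l _ muA_d2) _; first by rewrite lee_fin.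
  rewrite -EFinM lee_fin /d2 mulrA ler_pdivrMr ?ltr_wpDl //.
  by rewrite mulrC ler_pM2l // lerDl.
have s_bound : s%:E * \int[mu]_(x in A) (f n x `^ p * w x)%R%:E <= q%:E.
  apply: le_trans (lee_wpmul2l _ (ltW (le_lt_trans _ (fC n)))) _.
  - by rewrite lee_fin ltW.
  - apply: ge0_subset_integral => //.
      apply/measurable_EFinP; apply: measurable_funM => //.
      exact: measurableT_comp (measurable_powR p) (mf n).
    by move=> x Dx; rewrite lee_fin mulr_ge0 ?powR_ge0 ?w0.
  - by rewrite -EFinM lee_fin.
have -> : (p * eps = q + q + q)%R by rewrite /q; field.
rewrite !EFinD; apply: le_lt_trans (leeD (leeD lns_bound s_bound) (lexx _)) _.
by rewrite lteD2lE //; exact: small_logw.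
Qed.
End integral_logplus.

Theorem mainTheorem10 (R : realType) (w : R -> R) (a b p C : R)
    (f : nat -> R -> R) :
  (forall x, 0 <= w x) -> periodic1 w -> measurable_fun setT w ->
  (@lebesgue_measure R).-integrable `[0, 1] (EFin \o w) ->
  a < b -> b - a <= 1 ->
  (-oo < \int[@lebesgue_measure R]_(x in `[a, b]) logE (w x))%E ->
  0 < p -> 0 < C ->
  (forall n, periodic1 (f n)) ->
  (forall n, measurable_fun setT (f n)) ->
  (forall n x, 0 < f n x) ->
  (forall n, (\int[@lebesgue_measure R]_(x in `[a, b])
                 ((f n x) `^ p * w x)%:E < C%:E)%E) ->
  forall eps : R, 0 < eps ->
  exists2 delta : R, 0 < delta &
    forall A : set R, measurable A -> A `<=` `[a, b] ->
      (@lebesgue_measure R A < delta%:E)%E ->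
      forall n, (\int[@lebesgue_measure R]_(x in A)
                   (logplus (f n x))%:E < eps%:E)%E.
Proof.
move=> w0 _ mw _ _ _ logw_gtNy p0 _ _ mf f0 fC.
apply: logplus_uniformly_abscont logw_gtNy p0 _ _ fC => //.
- exact: measurable_funS mw.
- by move=> n; exact: measurable_funS (mf n).
Qed.
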